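(* Let $G$ be a finite simple connected graph with $n\ge 2$ vertices and maximum degree $\Delta$. Then (a) $c_{\infty}(G)\ge \dfrac{\iota_e n}{\Delta^2-\Delta+\iota_e(\Delta+1)}\ge \dfrac{\iota_e n}{2\Delta^2}$; (b) $c_{\infty}(G)\ge \dfrac{\iota_v n}{3\Delta+\iota_v(\Delta+1)}$; (c) $c_{\infty}(G)\ge \dfrac{\iota_v n}{4\Delta}$, where $\iota_e=\iota_e(G)$ and $\iota_v=\iota_v(G)$.
   Context: Cops and Robber with an infinitely fast robber: the game is played on a graph $G$. A set of cops first choose initial vertices (several cops may share a vertex); then the robber, knowing their positions, chooses a vertex. Then the players move in alternating rounds, cops first. In the cops' turn each cop either stays or moves to an adjacent vertex; in the robber's turn she either stays or moves along any path of $G$ starting at her current vertex that contains no vertex currently occupied by a cop. The cops win if at some point a cop moves to the vertex occupied by the robber. $c_{\infty}(G)$ is the minimum number of cops for which the cops have a strategy that guarantees a win. For $S\subseteq V(G)$, $\partial S$ is the set of edges with exactly one endpoint in $S$, and $N(S)$ is the set of vertices having a neighbour in $S$. The edge- and vertex-isoperimetric numbers are $\iota_e(G)=\min_{0<|S|\le n/2}|\partial S|/|S|$ and $\iota_v(G)=\min_{0<|S|\le n/2}|N(S)\setminus S|/|S|$. *)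

From HB Require Import structures.
From mathcomp Require Import all_boot all_order all_algebra.
From Stdlib Require Import ClassicalEpsilon.
Set Implicit Arguments. Unset Strict Implicit. Unset Printing Implicit Defensive.
Import Order.TTheory GRing.Theory Num.Theory.

(* A finite simple graph: vertex type T : finType, adjacency e : rel T,
   assumed symmetric and irreflexive in the theorem. *)

Section Graph.
Variables (T : finType) (e : rel T).

Definition maxdeg : nat := \max_(v : T) #|[set u | e v u]|.

(* |∂S| : edges with exactly one endpoint in S; each such edge {x,y} is
   counted once as the ordered pair (x,y) with x \in S, y \notin S. *)
Definition edge_boundary (S : {set T}) : nat :=
  #|[set p : T * T | [&& p.1 \in S, p.2 \notin S & e p.1 p.2]]|.

Definition vertex_boundary (S : {set T}) : {set T} :=
  [set y | (y \notin S) && [exists x in S, e x y]].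

Definition iso_admissible (S : {set T}) : bool :=
  (0 < #|S|) && (2 * #|S| <= #|T|).

(* minimum of ratio over admissible sets (0 if there is no admissible set) *)
Definition min_ratio (R : realFieldType) (ratio : {set T} -> R) : R :=
  match [pick A | iso_admissible A &&
           [forall B, iso_admissible B ==> (ratio A <= ratio B)%R]] with
  | Some A => ratio A
  | None => 0%R
  end.

Definition iota_e (R : realFieldType) : R :=
  min_ratio (fun S => ((edge_boundary S)%:R / (#|S|)%:R)%R).

Definition iota_v (R : realFieldType) : R :=
  min_ratio (fun S => ((#|vertex_boundary S|)%:R / (#|S|)%:R)%R).

Definition cops_move k (c c' : {ffun 'I_k -> T}) : Prop :=
  forall i, c' i = c i \/ e (c i) (c' i).

Definition robber_move k (c : {ffun 'I_k -> T}) (r r' : T) : Prop :=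
  r \notin codom c /\
  connect [rel x y | e x y && (y \notin codom c)] r r'.

(* cwin c r : it is the cops' turn, cops at c, robber at r, and the cops
   can force a capture in finitely many rounds (least fixed point). *)
Inductive cwin k : {ffun 'I_k -> T} -> T -> Prop :=
| cwin_step (c c' : {ffun 'I_k -> T}) (r : T) :
    cops_move c c' ->
    ((exists i, c' i = r) \/
     (forall r', robber_move c' r r' -> cwin c' r')) ->
    cwin c r.

Definition cops_win (k : nat) : Prop :=
  exists c0 : {ffun 'I_k -> T}, forall r0 : T, cwin c0 r0.

Lemma cops_win_card : cops_win #|T|.
Proof.
exists [ffun i => enum_val i] => r.
apply: (@cwin_step _ [ffun i => enum_val i] [ffun i => enum_val i] r).
  by move=> i; left.
by left; exists (enum_rank r); rewrite ffunE enum_rankK.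
Qed.

Definition cops_winb (k : nat) : bool :=
  if excluded_middle_informative (cops_win k) then true else false.

Lemma cops_winb_ex : exists k, cops_winb k.
Proof.
exists #|T|; rewrite /cops_winb.
by case: excluded_middle_informative => // H; exfalso; apply: H; exact: cops_win_card.
Qed.

Definition c_infty : nat := ex_minn cops_winb_ex.

End Graph.

From HB Require Import structures.
From mathcomp Require Import all_boot all_order all_algebra.
From Stdlib Require Import Classical ClassicalEpsilon.
From mathcomp Require Import zify lra.
Import Order.TTheory GRing.Theory Num.Theory.
Set Implicit Arguments. Unset Strict Implicit.

(* Suppose k cops win. If every cop position c left, in G - N[c], a connected
   set of more than n/2 vertices, the robber could stay in such a set forever:
   the cops' next position c' lies in N[c], so the current set L is still
   cop-free, and L meets the large set for c', into which she walks within L.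
   Hence some position c leaves only components of size at most n/2 outside
   Y = N[c], where |Y| <= k(Δ+1). Cutting V \ Y into such pieces gives
   ι_e |V \ Y| <= |∂(V \ Y)| <= kΔ(Δ-1), since every boundary edge joins a
   neighbour of a cop to one of its other Δ-1 neighbours. For ι_v, a maximal
   union S of components with |S| <= n/2 has N(S) \ S among the cop
   neighbours, so ι_v |S| <= kΔ, while |V \ Y| <= 3|S| and either S = V \ Y
   or |S| > n/4. *)

Lemma card_bigcup_leq (I U : finType) (P : pred I) (F : I -> {set U}) :
  #|\bigcup_(i | P i) F i| <= \sum_(i | P i) #|F i|.
Proof.
elim/big_rec2: _ => [|i s A _ h]; first by rewrite cards0.
by apply: leq_trans (leq_card_setU _ _).1 _; rewrite leq_add2l.
Qed.

Lemma leq_sum_const (I : finType) (P : pred I) (F : I -> nat) m :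
  (forall i, P i -> F i <= m) -> \sum_(i | P i) F i <= #|P| * m.
Proof. by move=> h; rewrite -sum_nat_const leq_sum. Qed.

Lemma leq_sum_ord_const n (F : 'I_n -> nat) m :
  (forall i, F i <= m) -> \sum_(i < n) F i <= n * m.
Proof.
move=> h; apply: (@leq_trans (\sum_(i < n) m)); first exact: leq_sum.
by rewrite sum_nat_const card_ord.
Qed.

Lemma cardsU_disjoint (U : finType) (A B : {set U}) :
  [disjoint A & B] -> #|A :|: B| = #|A| + #|B|.
Proof. by move=> hAB; apply/eqP; rewrite (leq_card_setU A B).2. Qed.

Lemma half_sets_meet (U : finType) (A B : {set U}) :
  #|U| < 2 * #|A| -> #|U| < 2 * #|B| -> A :&: B != set0.
Proof.
move=> hA hB; apply/negP => /eqP hAB.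
have := cardsUI A B; rewrite hAB cards0 addn0 => hU.
by have := max_card (A :|: B); rewrite hU; lia.
Qed.

Section Game.
Variables (T : finType) (e : rel T).

(* [cwin_ind] gives no induction hypothesis under the disjunction. *)
Lemma cwin_nested_ind k (P : {ffun 'I_k -> T} -> T -> Prop) :
  (forall c c' r, cops_move e c c' ->
     (exists i, c' i = r) \/ (forall r', robber_move e c' r r' -> P c' r') ->
     P c r) ->
  forall c r, cwin e c r -> P c r.
Proof.
move=> H; fix IH 3 => c r [{}c c' {}r hm hor].
apply: (H _ c') => //; case: hor => [h|h]; [by left | right].
by move=> r' hr'; apply: IH; apply: h.
Qed.

Definition cops_nbhd k (c : {ffun 'I_k -> T}) : {set T} :=
  [set y | [exists i, (c i == y) || e (c i) y]].

Definition restr_rel (L : {set T}) : rel T := [rel a b | e a b && (b \in L)].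

Definition large_connected (Y L : {set T}) : Prop :=
  [/\ L \subset ~: Y, #|T| < 2 * #|L| &
      {in L &, forall x y, connect (restr_rel L) x y}].

Section Robber.
Variable k : nat.
Hypothesis large_everywhere :
  forall c : {ffun 'I_k -> T}, exists L, large_connected (cops_nbhd c) L.

Lemma robber_evades (c : {ffun 'I_k -> T}) r : cwin e c r ->
  forall L, large_connected (cops_nbhd c) L -> r \notin L.
Proof.
elim/cwin_nested_ind=> {}c c' {}r hm hor L [hLY hLn hLc]; apply/negP => hr.
have c'N i : c' i \in cops_nbhd c.
  by rewrite inE; apply/existsP; exists i; case: (hm i) => ->; rewrite ?eqxx ?orbT.
have LnotN x : x \in L -> x \notin cops_nbhd c.
  by move=> hx; have := subsetP hLY x hx; rewrite inE.
have freeL x : x \in L -> x \notin codom c'.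
  by move=> hx; apply/codomP => -[i hi]; have := LnotN x hx; rewrite hi c'N.
case: hor => [[i hi] | hall].
  by have := freeL r hr; rewrite -hi codom_f.
have [L' hL'] := large_everywhere c'; have [_ hL'n _] := hL'.
have /set0Pn [v] := half_sets_meet hLn hL'n; rewrite inE => /andP [hv hv'].
apply: (negP (hall v _ L' hL')) => //; split; first exact: freeL.
apply: connect_sub (hLc r v hr hv) => x y /andP [exy hy].
by apply: connect1; rewrite /= exy freeL.
Qed.

End Robber.

Lemma cops_win_trap k : cops_win e k ->
  exists c : {ffun 'I_k -> T}, forall L, ~ large_connected (cops_nbhd c) L.
Proof.
move=> [c0 hc0]; apply: NNPP => hn.
have H (c : {ffun 'I_k -> T}) : exists L, large_connected (cops_nbhd c) L.
  by apply: NNPP => h; apply: hn; exists c => L hL; apply: h; exists L.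
have [L hL] := H c0.
have /card_gt0P [r hr] : 0 < #|L| by case: hL => _ hn' _; lia.
by have := robber_evades H (hc0 r) hL; rewrite hr.
Qed.

Lemma cops_win_c_infty : cops_win e (c_infty e).
Proof.
rewrite /c_infty; case: ex_minnP => m + _.
by rewrite /cops_winb; case: excluded_middle_informative.
Qed.

End Game.

Section Components.
Variables (T : finType) (e : rel T).
Hypothesis e_sym : symmetric e.

(* W is a union of connected components of G - Y. *)
Definition comp_closed (Y W : {set T}) : bool :=
  (W \subset ~: Y) && [forall x in W, forall z, e x z ==> (z \in Y) || (z \in W)].

Lemma comp_closedP (Y W : {set T}) :
  reflect (W \subset ~: Y /\ forall x z, x \in W -> e x z -> (z \in Y) || (z \in W))
          (comp_closed Y W).
Proof.
apply: (iffP andP) => -[hWY hW]; split => //.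
  by move=> x z hx; have /forallP/(_ z)/implyP := (forall_inP hW) x hx.
by apply/forall_inP => x hx; apply/forallP => z; apply/implyP; apply: hW.
Qed.

Lemma comp_closed0 (Y : {set T}) : comp_closed Y set0.
Proof. by apply/comp_closedP; split=> [|x z]; rewrite ?sub0set ?inE. Qed.

Lemma comp_closedC (Y : {set T}) : comp_closed Y (~: Y).
Proof. by apply/comp_closedP; split=> // x z _ _; rewrite inE orbN. Qed.

Lemma comp_closedU (Y A B : {set T}) :
  comp_closed Y A -> comp_closed Y B -> comp_closed Y (A :|: B).
Proof.
move=> /comp_closedP [hA1 hA2] /comp_closedP [hB1 hB2]; apply/comp_closedP.
split=> [|x z]; first by rewrite subUset hA1 hB1.
rewrite !inE => /orP [hx|hx] hxz.
  by case/orP: (hA2 x z hx hxz) => ->; rewrite ?orbT.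
by case/orP: (hB2 x z hx hxz) => ->; rewrite ?orbT.
Qed.

Lemma comp_closedD (Y W P : {set T}) :
  comp_closed Y W -> comp_closed Y P -> comp_closed Y (W :\: P).
Proof.
move=> /comp_closedP [hW1 hW2] /comp_closedP [hP1 hP2]; apply/comp_closedP.
split=> [|x z]; first exact: subset_trans (subsetDl W P) hW1.
rewrite inE => /andP [hxP hxW] hxz.
case/orP: (hW2 x z hxW hxz) => [-> // | hzW].
rewrite inE hzW andbT; apply/orP; right; apply/negP => hzP.
have /orP [hxY|] := hP2 z x hzP (etrans (e_sym z x) hxz); last exact/negP.
by have := subsetP hW1 x hxW; rewrite inE hxY.
Qed.

Section NoLargeConnected.
Variable Y : {set T}.
Hypothesis no_large : forall L, ~ large_connected e Y L.

(* A nonempty comp_closed set of minimum size is connected, hence small. *)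
Lemma comp_closed_small_subset W : comp_closed Y W -> W != set0 ->
  exists P : {set T}, [/\ P \subset W, P != set0, comp_closed Y P & 2 * #|P| <= #|T|].
Proof.
move=> hW hW0.
pose Q (P : {set T}) := [&& P \subset W, P != set0 & comp_closed Y P].
have QW : Q W by rewrite /Q subxx hW0 hW.
case: (arg_minnP (fun P : {set T} => #|P|) QW) => P /and3P [hPW hP0 hPc] hmin.
exists P; split => //; rewrite leqNgt; apply/negP => hbig.
case: (@no_large P); split => //; first by case/andP: hPc.
move=> x y hx hy.
pose C := [set z in P | connect (restr_rel e P) x z].
have hCP : C \subset P by apply/subsetP => z; rewrite inE => /andP [].
have hCc : comp_closed Y C.
  apply/comp_closedP; split; first by apply: subset_trans hCP _; case/andP: hPc.
  move=> a b; rewrite inE => /andP [ha hxa] hab.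
  case/comp_closedP: hPc => _ /(_ a b ha hab) /orP [-> // | hb].
  rewrite inE hb /=; apply/orP; right; apply: connect_trans hxa _.
  by apply: connect1; apply/andP.
have QC : Q C.
  rewrite /Q (subset_trans hCP hPW) hCc andbT.
  by apply/set0Pn; exists x; rewrite inE hx connect0.
have /eqP hCe : C == P by rewrite eqEcard hCP hmin.
have : y \in C by rewrite hCe.
by rewrite inE => /andP [].
Qed.

(* For S maximal, a small comp_closed P in ~: Y :\: S gives |S| + |P| > n/2,
   and maximality again bounds the rest of ~: Y :\: S by |S|. *)
Lemma comp_closed_large_half : exists S : {set T},
  [/\ comp_closed Y S, 2 * #|S| <= #|T|, #|~: Y| <= 3 * #|S| &
      S = ~: Y \/ #|T| < 4 * #|S|].
Proof.
pose Q (S : {set T}) := comp_closed Y S && (2 * #|S| <= #|T|).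
have Q0 : Q set0 by rewrite /Q comp_closed0 cards0.
case: (arg_maxnP (fun S : {set T} => #|S|) Q0) => S /andP [hSc hSn] hmax.
exists S; suff [] : #|~: Y| <= 3 * #|S| /\ (S = ~: Y \/ #|T| < 4 * #|S|) by [].
have hSY : S \subset ~: Y by case/andP: hSc.
have cY : #|~: Y| = #|S| + #|~: Y :\: S|.
  by rewrite -(cardsID S (~: Y)) (setIidPr hSY).
have [/eqP hW0 | hW0] := eqVneq (~: Y :\: S) set0.
  have hSe : S = ~: Y by apply/eqP; rewrite eqEsubset hSY -setD_eq0 hW0.
  by split; [rewrite hSe; lia | left].
have hWc : comp_closed Y (~: Y :\: S) by apply: comp_closedD; rewrite ?comp_closedC.
have [P [hPW hP0 hPc hPn]] := comp_closed_small_subset hWc hW0.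
have hP1 : 0 < #|P| by rewrite card_gt0.
have hPS : #|P| <= #|S| by apply: hmax; rewrite /Q hPc hPn.
have cSP : #|S :|: P| = #|S| + #|P|.
  rewrite cardsU_disjoint // disjoint_sym disjoint_subset (subset_trans hPW) //.
  by apply/subsetP => x; rewrite !inE => /andP [].
have hSP : #|T| < 2 * (#|S| + #|P|).
  rewrite ltnNge; apply/negP => hle.
  have : #|S :|: P| <= #|S| by apply: hmax; rewrite /Q comp_closedU // cSP.
  rewrite cSP; lia.
have cW : #|~: Y :\: S| = #|P| + #|(~: Y :\: S) :\: P|.
  by rewrite -(cardsID P (~: Y :\: S)) (setIidPr hPW).
have hRc : comp_closed Y ((~: Y :\: S) :\: P) by apply: comp_closedD.
have hM : #|~: Y| <= #|T| by apply: max_card.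
split; last by right; lia.
have [hR | hR] := leqP (2 * #|(~: Y :\: S) :\: P|) #|T|; last by lia.
have : #|(~: Y :\: S) :\: P| <= #|S| by apply: hmax; rewrite /Q hRc hR.
lia.
Qed.

End NoLargeConnected.
End Components.

Section Boundaries.
Variables (T : finType) (e : rel T).
Hypothesis e_sym : symmetric e.
Local Notation D := (maxdeg e).

Lemma card_nbr_le_maxdeg v : #|[set u | e v u]| <= D.
Proof. by rewrite /maxdeg; apply: (@leq_bigmax _ (fun v => #|[set u | e v u]|)). Qed.

Lemma maxdeg_gt0 : 2 <= #|T| -> (forall x y, connect e x y) -> 0 < D.
Proof.
move=> hT hconn; have /card_gt0P [x _] : 0 < #|T| by lia.
have /card_gt0P [y] : 0 < #|[set~ x]| by rewrite cardsC1; lia.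
rewrite !inE => hyx.
case/connectP: (hconn x y) => [[|z p]] /= hp hl; first by rewrite hl eqxx in hyx.
apply: leq_trans (card_nbr_le_maxdeg x); rewrite card_gt0; apply/set0Pn.
by exists z; rewrite inE; case/andP: hp.
Qed.

Lemma edge_boundary_set1 v : edge_boundary e [set v] <= D.
Proof.
apply: leq_trans (card_nbr_le_maxdeg v); rewrite /edge_boundary.
apply: leq_trans (leq_imset_card (pair v) _); apply: subset_leq_card.
apply/subsetP => -[x y]; rewrite !inE /= => /and3P [/eqP -> _ hxy].
by apply/imsetP; exists y; rewrite ?inE.
Qed.

Lemma vertex_boundary_set1 v : #|vertex_boundary e [set v]| <= D.
Proof.
apply: leq_trans (card_nbr_le_maxdeg v); apply: subset_leq_card; apply/subsetP => y.
by rewrite !inE => /andP [_ /exists_inP [x]]; rewrite inE => /eqP ->.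
Qed.

Lemma card_vertex_boundary_leC S : #|vertex_boundary e S| <= #|~: S|.
Proof. by apply: subset_leq_card; apply/subsetP => y; rewrite !inE => /andP []. Qed.

Lemma exists_admissible_third : 2 <= #|T| ->
  exists S : {set T}, iso_admissible S /\ #|T| <= 3 * #|S|.
Proof.
move=> hT; pose Q (S : {set T}) := 2 * #|S| <= #|T|.
have Q0 : Q set0 by rewrite /Q cards0.
case: (arg_maxnP (fun S : {set T} => #|S|) Q0) => S hS hmax.
have /card_gt0P [x] : 0 < #|~: S| by have := cardsC S; move: hS; rewrite /Q; lia.
rewrite inE => hx; have := hmax (x |: S); rewrite /Q cardsU1 hx /= => hm.
have h1 : #|T| < 2 * (1 + #|S|) by rewrite ltnNge; apply/negP => h; have := hm h; lia.
by exists S; rewrite /iso_admissible -/(Q S) hS andbT; split; lia.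
Qed.

(* No edge joins P to W :\: P: both are unions of components of G - Y. *)
Lemma edge_boundary_splitD (Y W P : {set T}) :
  comp_closed e Y W -> comp_closed e Y P -> P \subset W ->
  edge_boundary e P + edge_boundary e (W :\: P) <= edge_boundary e W.
Proof.
move=> hW hP hPW; have hWP := comp_closedD e_sym hW hP.
have hWY : W \subset ~: Y by case/andP: hW.
have leaves_W (Z : {set T}) x y : comp_closed e Y Z -> x \in Z -> y \notin Z ->
    e x y -> y \notin W.
  case/comp_closedP=> _ hZ hx hy hxy; apply/negP => hyW.
  have := subsetP hWY y hyW; rewrite inE.
  by have := hZ x y hx hxy; rewrite (negbTE hy) orbF => ->.
rewrite /edge_boundary -cardsU_disjoint; last first.
  rewrite disjoints_subset; apply/subsetP => -[x y].
  by rewrite !inE /= => /and3P [hx _ _]; rewrite hx.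
apply: subset_leq_card; apply/subsetP => -[x y]; rewrite !inE /=.
case/orP => [/and3P [hx hy hxy] | /and3P [/andP [hxP hxW] hy hxy]].
  by rewrite (subsetP hPW x hx) hxy (leaves_W P x y).
have hx' : x \in W :\: P by rewrite inE hxP hxW.
by rewrite hxW hxy (leaves_W _ x y hWP hx') ?inE.
Qed.

Section Cops.
Variables (k : nat) (c : {ffun 'I_k -> T}).
Local Notation Y := (cops_nbhd e c).

Lemma card_cops_nbhd : #|Y| <= k * D.+1.
Proof.
have sub : Y \subset \bigcup_(i | true) (c i |: [set u | e (c i) u]).
  apply/subsetP => y; rewrite inE => /existsP [i hi]; apply/bigcupP; exists i => //.
  by case/orP: hi => [/eqP ->|h]; rewrite !inE ?eqxx // h orbT.
apply: leq_trans (subset_leq_card sub) _; apply: leq_trans (card_bigcup_leq _ _) _.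
apply: leq_sum_ord_const => i; rewrite cardsU1.
by have := card_nbr_le_maxdeg (c i); case: (_ \notin _) => /=; lia.
Qed.

Lemma notin_cops_nbhd x i : x \notin Y -> (c i != x) && ~~ e (c i) x.
Proof.
by rewrite -negb_or; apply: contra => hi; rewrite inE; apply/existsP; exists i.
Qed.

Lemma nbr_outside_cops_nbhd x y : x \notin Y -> e x y -> y \in Y ->
  exists2 i, e (c i) y & c i != y.
Proof.
move=> hx hxy; rewrite inE => /existsP [i hi].
have hiy : c i != y.
  by apply/eqP => hci; move: (notin_cops_nbhd i hx); rewrite hci e_sym hxy andbF.
by exists i; rewrite // (negbTE hiy) in hi.
Qed.

Lemma vertex_boundary_comp_closed S : comp_closed e Y S ->
  #|vertex_boundary e S| <= k * D.
Proof.
case/comp_closedP => hSY hS.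
have sub : vertex_boundary e S \subset \bigcup_(i | true) [set u | e (c i) u].
  apply/subsetP => y; rewrite inE => /andP [hyS /exists_inP [x hx hxy]].
  have hxY : x \notin Y by have := subsetP hSY x hx; rewrite inE.
  have := hS x y hx hxy; rewrite (negbTE hyS) orbF => hyY.
  have [i hi _] := nbr_outside_cops_nbhd hxY hxy hyY.
  by apply/bigcupP; exists i; rewrite ?inE.
apply: leq_trans (subset_leq_card sub) _; apply: leq_trans (card_bigcup_leq _ _) _.
by apply: leq_sum_ord_const => i; apply: card_nbr_le_maxdeg.
Qed.

Lemma edge_boundary_cops_nbhdC : edge_boundary e (~: Y) <= k * (D * D.-1).
Proof.
pose F (i : 'I_k) := \bigcup_(y in [set u | e (c i) u])
   [set (x, y) | x in [set u | e y u] :\ c i].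
have sub : [set p : T * T | [&& p.1 \in ~: Y, p.2 \notin ~: Y & e p.1 p.2]]
    \subset \bigcup_(i | true) F i.
  apply/subsetP => -[x y]; rewrite inE /= !in_setC negbK => /and3P [hxY hyY hxy].
  have [i hi hiy] := nbr_outside_cops_nbhd hxY hxy hyY.
  apply/bigcupP; exists i => //; apply/bigcupP; exists y; first by rewrite inE.
  apply/imsetP; exists x => //.
  by rewrite !inE e_sym hxy andbT eq_sym; case/andP: (notin_cops_nbhd i hxY).
rewrite /edge_boundary; apply: leq_trans (subset_leq_card sub) _.
apply: leq_trans (card_bigcup_leq _ _) _; apply: leq_sum_ord_const => i.
apply: leq_trans (card_bigcup_leq _ _) _.
apply: leq_trans (leq_sum_const (m := D.-1) _) _.
  move=> y; rewrite inE => hy; apply: leq_trans (leq_imset_card _ _) _.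
  have := cardsD1 (c i) [set u | e y u]; rewrite inE e_sym hy.
  by have := card_nbr_le_maxdeg y; lia.
by rewrite leq_mul2r card_nbr_le_maxdeg orbT.
Qed.

End Cops.
End Boundaries.

Section Isoperimetry.
Variables (R : realFieldType) (T : finType) (e : rel T).
Hypothesis e_sym : symmetric e.
Local Open Scope ring_scope.

Definition card_ratio (f : {set T} -> nat) (S : {set T}) : R := (f S)%:R / #|S|%:R.

Lemma min_ratio_le (f : {set T} -> R) (S : {set T}) :
  iso_admissible S -> min_ratio f <= f S.
Proof.
move=> hS; rewrite /min_ratio; case: pickP => [A /andP [_ /forallP /(_ S)] | hnone].
  by rewrite hS.
have [A hA hmin] := extremumP f (@lexx _ R) (@le_trans _ R) (@le_total _ R) hS.
have /negbT/negP := hnone A; rewrite /= hA; case.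
by apply/forallP => B; apply/implyP; apply: hmin.
Qed.

Lemma min_card_ratio_ge0 (f : {set T} -> nat) : 0 <= min_ratio (card_ratio f).
Proof. by rewrite /min_ratio; case: pickP => // A _; rewrite divr_ge0. Qed.

Lemma min_card_ratio_mul_card (f : {set T} -> nat) (S : {set T}) :
  (2 * #|S| <= #|T|)%N -> min_ratio (card_ratio f) * #|S|%:R <= (f S)%:R.
Proof.
move=> hS; have [-> | hS0] := posnP #|S|; first by rewrite mulr0.
by rewrite -ler_pdivlMr ?ltr0n //; apply: min_ratio_le; rewrite /iso_admissible hS0 hS.
Qed.

Lemma min_card_ratio_le_set1 (f : {set T} -> nat) v : (2 <= #|T|)%N ->
  min_ratio (card_ratio f) <= (f [set v])%:R.
Proof.
move=> hT; have := @min_card_ratio_mul_card f [set v].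
by rewrite cards1 mulr1; apply.
Qed.

Lemma iota_e_comp_closed (Y : {set T}) : (forall L, ~ large_connected e Y L) ->
  forall W, comp_closed e Y W -> iota_e e R * #|W|%:R <= (edge_boundary e W)%:R.
Proof.
move=> no_large W; have [m] := ubnP #|W|; elim: m W => // m IH W hWm hW.
have [-> | hW0] := eqVneq W set0; first by rewrite cards0 mulr0.
have [P [hPW hP0 hPc hPn]] := comp_closed_small_subset no_large hW hW0.
have hWP := comp_closedD e_sym hW hPc.
have cW : #|W| = (#|P| + #|W :\: P|)%N by rewrite -(cardsID P W) (setIidPr hPW).
have hlt : (#|W :\: P| < m)%N by move: hWm hP0; rewrite cW -card_gt0; lia.
rewrite cW natrD mulrDr.
apply: le_trans (lerD (min_card_ratio_mul_card _ hPn) (IH _ hlt hWP)) _.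
by rewrite -natrD ler_nat (edge_boundary_splitD e_sym hW hPc hPW).
Qed.

Lemma iota_v_le2 : (2 <= #|T|)%N -> iota_v e R <= 2.
Proof.
move=> hT; have [S [/andP [hS0 hS] hT3]] := exists_admissible_third hT.
have hvb : (#|vertex_boundary e S| <= 2 * #|S|)%N.
  by apply: leq_trans (card_vertex_boundary_leC e S) _; have := cardsC S; lia.
rewrite -(@ler_pM2r _ #|S|%:R) ?ltr0n //.
apply: le_trans (min_card_ratio_mul_card _ hS) _.
by rewrite -(natrM R 2) ler_nat.
Qed.

End Isoperimetry.

Lemma cops_trap_bounds (R : realFieldType) (T : finType) (e : rel T) k :
  symmetric e -> cops_win e k ->
  exists y m s : nat, [/\ y + m = #|T|, y <= k * (maxdeg e).+1,
    (iota_e e R * m%:R <= (k * (maxdeg e * (maxdeg e).-1))%:R)%R,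
    (iota_v e R * s%:R <= (k * maxdeg e)%:R)%R &
    m <= 3 * s /\ (s = m \/ #|T| < 4 * s)].
Proof.
move=> e_sym /cops_win_trap [c no_large].
have [S [hSc hSn hS3 hS4]] := comp_closed_large_half e_sym no_large.
exists #|cops_nbhd e c|, #|~: cops_nbhd e c|, #|S|; split.
- exact: cardsC.
- exact: card_cops_nbhd.
- apply: le_trans (iota_e_comp_closed R e_sym no_large (comp_closedC _ _)) _.
  by rewrite ler_nat edge_boundary_cops_nbhdC.
- apply: le_trans (min_card_ratio_mul_card R _ hSn) _.
  by rewrite ler_nat (vertex_boundary_comp_closed e_sym hSc).
- by split=> //; case: hS4 => [->|]; [left | right].
Qed.

Section Arithmetic.
Variable R : realFieldType.
Local Open Scope ring_scope.

Lemma ler_wpdivrMr (x y z : R) : 0 <= y -> 0 <= z -> x <= z * y -> x / y <= z.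
Proof.
move=> hy hz h; have [-> | hy0] := eqVneq y 0; first by rewrite invr0 mulr0.
by rewrite ler_pdivrMr // lt_def hy0 hy.
Qed.

Lemma cops_lower_edge (ie D c y m : R) :
  0 <= ie -> 1 <= D -> 0 <= c -> y <= c * (D + 1) -> ie * m <= c * (D * (D - 1)) ->
  ie * (y + m) / (D ^+ 2 - D + ie * (D + 1)) <= c.
Proof. by move=> *; apply: ler_wpdivrMr => //; nra. Qed.

Lemma cops_lower_edge_weaken (ie D n : R) :
  0 <= ie -> ie <= D -> 1 <= D -> 0 <= n ->
  ie * n / (2 * D ^+ 2) <= ie * n / (D ^+ 2 - D + ie * (D + 1)).
Proof.
move=> ie0 ieD D1 n0; have [-> | ie_neq0] := eqVneq ie 0; first by rewrite !mul0r.
have ie_gt0 : 0 < ie by rewrite lt_def ie_neq0 ie0.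
by rewrite ler_wpM2l ?mulr_ge0 // lef_pV2 ?posrE; nra.
Qed.

Lemma cops_lower_vertex3 (iv D c y m s : R) :
  0 <= iv -> 1 <= D -> 0 <= c -> y <= c * (D + 1) -> m <= 3 * s -> iv * s <= c * D ->
  iv * (y + m) / (3 * D + iv * (D + 1)) <= c.
Proof. by move=> *; apply: ler_wpdivrMr => //; nra. Qed.

(* In the case s = m one needs iv * (D + 1) <= 3 * D: from iv <= 2 if
   D >= 2, and from iv <= D if D = 1. *)
Lemma cops_lower_vertex4 (iv D c y m s : R) :
  0 <= iv -> iv <= 2 -> iv <= D -> 1 <= D -> 0 <= c ->
  y <= c * (D + 1) -> iv * s <= c * D -> s = m \/ y + m < 4 * s ->
  iv * (y + m) / (4 * D) <= c.
Proof.
move=> iv0 iv2 ivD D1 c0 hy hs hsm; apply: ler_wpdivrMr => //; first by nra.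
case: hsm => [<- | hn]; last by nra.
have : iv * (D + 1) <= 3 * D by case: (lerP D 2) => hD2; nra.
nra.
Qed.

End Arithmetic.

Local Open Scope ring_scope.

Theorem mainTheorem3 (R : realFieldType) (T : finType) (e : rel T) :
  symmetric e -> irreflexive e -> (forall x y, connect e x y) ->
  (2 <= #|T|)%N ->
  let n : R := (#|T|)%:R in
  let D : R := (maxdeg e)%:R in
  let ie : R := iota_e e R in
  let iv : R := iota_v e R in
  let c : R := (c_infty e)%:R in
  [/\ ie * n / (D ^+ 2 - D + ie * (D + 1)) <= c
      /\ ie * n / (2 * D ^+ 2) <= ie * n / (D ^+ 2 - D + ie * (D + 1)),
      iv * n / (3 * D + iv * (D + 1)) <= c
    & iv * n / (4 * D) <= c].
Proof.
move=> e_sym _ hconn hT n D ie iv c.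
have [y [m [s [hn hy hm hs [h3 h4]]]]] := cops_trap_bounds R e_sym (cops_win_c_infty e).
have D_gt0 := maxdeg_gt0 hT hconn.
have D1 : 1 <= D by rewrite ler1n.
have ie0 : 0 <= ie by exact: min_card_ratio_ge0.
have iv0 : 0 <= iv by exact: min_card_ratio_ge0.
have /card_gt0P [v _] : (0 < #|T|)%N by lia.
have ieD : ie <= D.
  apply: le_trans (min_card_ratio_le_set1 R _ v hT) _.
  by rewrite ler_nat edge_boundary_set1.
have ivD : iv <= D.
  apply: le_trans (min_card_ratio_le_set1 R _ v hT) _.
  by rewrite ler_nat vertex_boundary_set1.
have hnR : n = y%:R + m%:R by rewrite /n -hn natrD.
have hyR : y%:R <= c * (D + 1) by rewrite /c /D natr1 -natrM ler_nat.
have hmR : ie * m%:R <= c * (D * (D - 1)).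
  by rewrite /c /D -[1]/(1%:R) -natrB // -!natrM subn1.
have hsR : iv * s%:R <= c * D by rewrite /c /D -natrM.
rewrite hnR; split; first split.
- exact: cops_lower_edge.
- by apply: cops_lower_edge_weaken; rewrite // addr_ge0.
- by apply: (cops_lower_vertex3 (s := s%:R)) => //; rewrite -(natrM R 3) ler_nat.
- apply: (cops_lower_vertex4 (s := s%:R)) => //; first exact: iota_v_le2.
  case: h4 => [-> | h4]; [by left | right].
  by rewrite -natrD -(natrM R 4) ltr_nat hn.
Qed.
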